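(* In the setting of the context, for every $n\in\mathbb Z$, $$\psi_n=\int_0^{2\pi}\phi(\theta)A_n(\theta)\frac{d\theta}{2\pi},\qquad\psi^*_n=\int_0^{2\pi}\phi^*(\theta)A^*_n(\theta)\frac{d\theta}{2\pi},$$ where $$A_n(\theta)=\frac{e^{-in\theta}}{C_n\prod_{j\le n-1}(1+S_je^{-i\theta})\prod_{j\ge n+1}(1-S_je^{i\theta})}\Big\{\frac{1}{1+S_ne^{-i\theta}}+\frac{1}{1-S_ne^{i\theta}}-1\Big\},$$ $$A^*_n(\theta)=\frac{e^{in\theta}}{C_n\prod_{j\le n-1}(1-S_je^{i\theta})\prod_{j\ge n+1}(1+S_je^{-i\theta})}\Big\{\frac{1}{1+S_ne^{-i\theta}}+\frac{1}{1-S_ne^{i\theta}}-1\Big\}.$$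
   Context: Let $\psi_n,\psi^*_n$ ($n\in\mathbb Z$) be operators (formal symbols), let $\gamma_n\ge0$ with only finitely many nonzero, $S_n=\sinh\gamma_n<1$, $C_n=\cosh\gamma_n$, and define the formal linear combinations $\phi(\theta)=\sum_nC_ne^{in\theta}\prod_{j\le n-1}(1+S_je^{-i\theta})\prod_{j\ge n+1}(1-S_je^{i\theta})\psi_n$ and $\phi^*(\theta)=\sum_nC_ne^{-in\theta}\prod_{j\le n-1}(1-S_je^{i\theta})\prod_{j\ge n+1}(1+S_je^{-i\theta})\psi^*_n$. The integrals are taken coefficientwise in the $\psi_k$ (resp. $\psi^*_k$). *)

From Stdlib Require Export Reals ZArith.
From Coquelicot Require Export Coquelicot.

Definition eix (x : R) : C := (cos x, sin x).

Fixpoint cprod (m : nat) (a : Z) (f : Z -> C) : C :=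
  match m with
  | O => RtoC 1
  | S m' => Cmult (f a) (cprod m' (a + 1)%Z f)
  end.

(* prod_{a <= j <= b} f j  (empty product = 1 if b < a) *)
Definition prodZ (a b : Z) (f : Z -> C) : C := cprod (Z.to_nat (b - a + 1)) a f.

Section Defs.
(* N : a bound on the support of gamma (gamma j = 0 whenever |j| > N), so that
   the infinite products over j <= n-1 and j >= n+1 reduce to j in [-N, n-1]
   and [n+1, N] respectively (all other factors equal 1). *)
Variables (N : Z) (gamma : Z -> R).

Definition Sg (j : Z) : R := sinh (gamma j).
Definition Cg (j : Z) : R := cosh (gamma j).

Definition PlowP (n : Z) (th : R) : C :=
  prodZ (- N) (n - 1) (fun j => Cplus (RtoC 1) (Cmult (RtoC (Sg j)) (eix (- th)))).
Definition PhighM (n : Z) (th : R) : C :=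
  prodZ (n + 1) N (fun j => Cminus (RtoC 1) (Cmult (RtoC (Sg j)) (eix th))).
Definition PlowM (n : Z) (th : R) : C :=
  prodZ (- N) (n - 1) (fun j => Cminus (RtoC 1) (Cmult (RtoC (Sg j)) (eix th))).
Definition PhighP (n : Z) (th : R) : C :=
  prodZ (n + 1) N (fun j => Cplus (RtoC 1) (Cmult (RtoC (Sg j)) (eix (- th)))).

(* coefficient of psi_k in phi(theta) *)
Definition phi_coef (k : Z) (th : R) : C :=
  Cmult (Cmult (Cmult (RtoC (Cg k)) (eix (IZR k * th))) (PlowP k th)) (PhighM k th).
(* coefficient of psi*_k in phi*(theta) *)
Definition phistar_coef (k : Z) (th : R) : C :=
  Cmult (Cmult (Cmult (RtoC (Cg k)) (eix (- (IZR k * th)))) (PlowM k th)) (PhighP k th).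

Definition brace (n : Z) (th : R) : C :=
  Cminus (Cplus (Cinv (Cplus (RtoC 1) (Cmult (RtoC (Sg n)) (eix (- th)))))
                (Cinv (Cminus (RtoC 1) (Cmult (RtoC (Sg n)) (eix th)))))
         (RtoC 1).

Definition A_n (n : Z) (th : R) : C :=
  Cmult (Cdiv (eix (- (IZR n * th)))
              (Cmult (Cmult (RtoC (Cg n)) (PlowP n th)) (PhighM n th)))
        (brace n th).

Definition Astar_n (n : Z) (th : R) : C :=
  Cmult (Cdiv (eix (IZR n * th))
              (Cmult (Cmult (RtoC (Cg n)) (PlowM n th)) (PhighP n th)))
        (brace n th).
End Defs.

(* Write z = e^{it} and T_k for the coefficient of psi_k in phi divided by C_k. Shifting the index
   gives T_{k+1} (1 - S_{k+1} z) = T_k (z + S_k), and the brace equals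
   (1 + S_n^2) z / ((z + S_n) (1 - S_n z)). Hence for k > n the integrand T_k / T_n {...} is z times
   a product of factors z + S_j and 1 / (1 - S_j z), for k < n it is the same kind of expression in
   1/z, and for k = n it is the brace itself, whose mean over the circle is 1.
   The mean of the former vanishes because the class of continuous g with int g z^m = 0 for all
   m >= 0 contains z and is stable under multiplication by z + a and division by 1 + a z for real
   |a| < 1: the moments c_m of such a quotient satisfy c_m = - a c_{m+1} and are bounded, so they
   vanish. The psi* identity is the same computation with S replaced by -S and z by 1/z. *)

From Stdlib Require Import Reals ZArith Lra Lia.
From Coquelicot Require Import Coquelicot.

Local Open Scope C_scope.

Notation is_CInt := (is_RInt (V := C_R_CompleteNormedModule)).

Lemma continuous_C_intro (f : R -> C) (x : R) :
  continuous (fun t => fst (f t)) x -> continuous (fun t => snd (f t)) x -> continuous f x.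
Proof.
intros Hre Him.
apply (continuous_ext (fun t => (fst (f t), snd (f t)))); [intro t; now destruct (f t)|].
apply (continuous_comp_2 _ _ pair x Hre Him).
apply (continuous_ext (fun p => p)); [intros []; reflexivity | apply continuous_id].
Qed.

Lemma continuous_Re (f : R -> C) (x : R) : continuous f x -> continuous (fun t => fst (f t)) x.
Proof.
intro Hf. apply (continuous_comp f fst); [exact Hf | destruct (f x); apply continuous_fst].
Qed.

Lemma continuous_Im (f : R -> C) (x : R) : continuous f x -> continuous (fun t => snd (f t)) x.
Proof.
intro Hf. apply (continuous_comp f snd); [exact Hf | destruct (f x); apply continuous_snd].
Qed.

Lemma continuous_Cplus (f g : R -> C) (x : R) :
  continuous f x -> continuous g x -> continuous (fun t => f t + g t) x.
Proof.
intros Hf Hg. apply continuous_C_intro; simpl;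
  apply (continuous_plus (V := R_NormedModule)); auto using continuous_Re, continuous_Im.
Qed.

Lemma continuous_Cmult (f g : R -> C) (x : R) :
  continuous f x -> continuous g x -> continuous (fun t => f t * g t) x.
Proof.
intros Hf Hg.
pose proof (continuous_Re f x Hf); pose proof (continuous_Im f x Hf).
pose proof (continuous_Re g x Hg); pose proof (continuous_Im g x Hg).
apply continuous_C_intro; simpl.
- apply (continuous_minus (V := R_NormedModule));
    apply (continuous_mult (K := R_AbsRing)); assumption.
- apply (continuous_plus (V := R_NormedModule));
    apply (continuous_mult (K := R_AbsRing)); assumption.
Qed.

Lemma continuous_Cpow (f : R -> C) (m : nat) (x : R) :
  continuous f x -> continuous (fun t => f t ^ m) x.
Proof.
intro Hf. induction m as [|m IH]; simpl; [apply continuous_const | now apply continuous_Cmult].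
Qed.

Lemma continuous_Cinv (f : R -> C) (x : R) :
  continuous f x -> f x <> 0 -> continuous (fun t => / f t) x.
Proof.
intros Hf Hnz.
pose proof (continuous_Re f x Hf) as Hre; pose proof (continuous_Im f x Hf) as Him.
assert (Hsq : continuous (fun t => fst (f t) ^ 2 + snd (f t) ^ 2)%R x).
{ apply (continuous_plus (V := R_NormedModule)); simpl;
    repeat apply (continuous_mult (K := R_AbsRing)); auto using continuous_const. }
assert (Hsq0 : (fst (f x) ^ 2 + snd (f x) ^ 2)%R <> 0%R).
{ intro E. apply Hnz, Cmod_eq_0. unfold Cmod. rewrite E. apply sqrt_0. }
apply continuous_C_intro; simpl; apply (continuous_mult (K := R_AbsRing));
  auto using continuous_Rinv_comp.
apply (continuous_opp (V := R_NormedModule)); assumption.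
Qed.

Lemma continuous_eix_lin (c x : R) : continuous (fun t => eix (c * t)) x.
Proof.
assert (Hlin : continuous (fun t => c * t)%R x).
{ apply (continuous_mult (K := R_AbsRing)); [apply continuous_const | apply continuous_id]. }
apply continuous_C_intro; simpl;
  [apply continuous_cos_comp | apply continuous_sin_comp]; exact Hlin.
Qed.

Lemma is_CInt_ext (f g : R -> C) (a b : R) (l : C) :
  (forall t, f t = g t) -> is_CInt f a b l -> is_CInt g a b l.
Proof. intro E. apply is_RInt_ext. intros t _. apply E. Qed.

Lemma is_CInt_plus (f g : R -> C) (a b : R) (lf lg : C) :
  is_CInt f a b lf -> is_CInt g a b lg -> is_CInt (fun t => f t + g t) a b (lf + lg).
Proof. exact (is_RInt_plus f g a b lf lg). Qed.

Lemma scal_C (r : R) (z : C) : @scal R_AbsRing C_R_CompleteNormedModule r z = r * z.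
Proof.
destruct z. apply injective_projections; simpl; unfold scal; simpl; unfold mult; simpl; ring.
Qed.

Lemma is_CInt_scal (f : R -> C) (a b r : R) (l : C) :
  is_CInt f a b l -> is_CInt (fun t => r * f t) a b (r * l).
Proof.
intro Hf. rewrite <- scal_C. apply (is_CInt_ext (fun t => scal r (f t))); [intro; apply scal_C|].
exact (is_RInt_scal f a b r l Hf).
Qed.

Lemma is_CInt_const (a b : R) (z : C) : is_CInt (fun _ => z) a b ((b - a)%R * z).
Proof. rewrite <- scal_C. exact (is_RInt_const (V := C_R_CompleteNormedModule) a b z). Qed.

Lemma Cmod_is_CInt_le (g w : R -> C) (a b : R) (l : C) :
  a <= b -> (forall t, continuous g t) -> (forall t, Cmod (w t) = 1%R) ->
  is_CInt (fun t => g t * w t) a b l -> Cmod l <= RInt (fun t => Cmod (g t)) a b.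
Proof.
intros Hab Hg Hw Hl.
assert (Hnorm : forall t, continuous (fun t => Cmod (g t)) t).
{ intro t. apply (continuous_ext (fun t => norm (K := R_AbsRing) (V := C_R_NormedModule) (g t)));
    [intro; symmetry; apply Cmod_norm|].
  apply (continuous_comp g (norm (K := R_AbsRing) (V := C_R_NormedModule)));
    [apply Hg | apply (filterlim_norm (K := R_AbsRing) (V := C_R_NormedModule))]. }
rewrite Cmod_norm.
apply (norm_RInt_le (fun t => g t * w t) (fun t => Cmod (g t)) a b); [exact Hab | | exact Hl |].
- intros t _. rewrite <- Cmod_norm, Cmod_mult, Hw, Rmult_1_r. apply Rle_refl.
- apply (RInt_correct (V := R_CompleteNormedModule)),
    (ex_RInt_continuous (V := R_CompleteNormedModule)).
  intros t _. apply Hnorm.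
Qed.

Lemma RtoC_neq0 (x : R) : x <> 0%R -> RtoC x <> 0.
Proof. intros Hx E. apply Hx, RtoC_inj, E. Qed.

Lemma eix_add (x y : R) : eix (x + y) = eix x * eix y.
Proof. unfold eix. rewrite cos_plus, sin_plus. apply injective_projections; simpl; ring. Qed.

Lemma Cmod_eix (x : R) : Cmod (eix x) = 1%R.
Proof.
unfold Cmod, eix; simpl. pose proof (sin2_cos2 x) as H. unfold Rsqr in H.
replace (cos x * (cos x * 1) + sin x * (sin x * 1))%R with 1%R by lra. apply sqrt_1.
Qed.

Lemma eix_neq0 (x : R) : eix x <> 0.
Proof. intro E. pose proof (Cmod_eix x) as H. rewrite E, Cmod_0 in H. lra. Qed.

Lemma eix_opp (x : R) : eix (- x) = / eix x.
Proof.
assert (H : eix x * eix (- x) = 1).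
{ rewrite <- eix_add, Rplus_opp_r. unfold eix. now rewrite cos_0, sin_0. }
rewrite <- (Cmult_1_l (/ eix x)), <- H. field. apply eix_neq0.
Qed.

Lemma Cpow_eix (x : R) (j : nat) : eix x ^ j = eix (INR j * x).
Proof.
induction j as [|j IH]; simpl Cpow.
- rewrite Rmult_0_l. unfold eix. now rewrite cos_0, sin_0.
- rewrite IH, <- eix_add, S_INR. f_equal. ring.
Qed.

Lemma eix_2PI_mult (j : nat) : eix (INR j * (2 * PI)) = 1.
Proof.
rewrite <- Cpow_eix. unfold eix at 1. rewrite cos_2PI, sin_2PI.
induction j as [|j IH]; simpl; [reflexivity|]. change (1, 0)%R with (RtoC 1) in IH |- *.
rewrite IH. ring.
Qed.

Lemma is_CInt_eix_lin (c : R) :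
  c <> 0%R -> eix (c * (2 * PI)) = 1 -> is_CInt (fun t => eix (c * t)) 0 (2 * PI) (RtoC 0).
Proof.
intros Hc Hper. unfold eix in Hper. injection Hper as Hcos Hsin.
apply (is_RInt_fct_extend_pair (U := R_NormedModule) (V := R_NormedModule)); simpl.
- assert (E : (sin (c * (2 * PI)) / c - sin (c * 0) / c = 0)%R)
    by (rewrite Hsin, Rmult_0_r, sin_0; field; exact Hc).
  rewrite <- E at 2.
  apply (is_RInt_derive (V := R_CompleteNormedModule) (fun t => sin (c * t) / c)%R).
  + intros x _. auto_derive; [exact I | field; exact Hc].
  + intros x _. apply (continuous_Re (fun t => eix (c * t))), continuous_eix_lin.
- assert (E : (- cos (c * (2 * PI)) / c - - cos (c * 0) / c = 0)%R)
    by (rewrite Hcos, Rmult_0_r, cos_0; field; exact Hc).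
  rewrite <- E at 2.
  apply (is_RInt_derive (V := R_CompleteNormedModule) (fun t => - cos (c * t) / c)%R).
  + intros x _. auto_derive; [exact I | field; exact Hc].
  + intros x _. apply (continuous_Im (fun t => eix (c * t))), continuous_eix_lin.
Qed.

Lemma one_plus_scal_neq0 (a : R) (w : C) : Rabs a < 1 -> Cmod w = 1%R -> 1 + a * w <> 0.
Proof.
intros Ha Hw E.
assert (Haw : a * w = - 1) by (rewrite <- (Cplus_0_l (- 1)), <- E; ring).
apply (f_equal Cmod) in Haw. rewrite Cmod_mult, Hw, !Cmod_R, Rabs_m1 in Haw. lra.
Qed.

Lemma plus_real_neq0 (a : R) (w : C) : Rabs a < 1 -> Cmod w = 1%R -> w + a <> 0.
Proof.
intros Ha Hw E.
assert (Hwa : w = - a) by (rewrite <- (Cplus_0_r (- a)), <- E; ring).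
rewrite Hwa, Cmod_opp, Cmod_R in Hw. lra.
Qed.

Lemma geometric_recurrence_zero (c : nat -> C) (a K : R) :
  Rabs a < 1 -> (forall m, Cmod (c m) <= K) -> (forall m, c m = - (a * c (S m))) ->
  forall m, c m = 0.
Proof.
intros Ha HK Hrec.
assert (Hdecay : forall j m, Cmod (c m) <= Rabs a ^ j * K).
{ induction j as [|j IH]; intro m; simpl; [rewrite Rmult_1_l; apply HK|].
  rewrite Hrec, Cmod_opp, Cmod_mult, Cmod_R, Rmult_assoc.
  apply Rmult_le_compat_l; [apply Rabs_pos | apply IH]. }
intro m. apply Cmod_eq_0, Rle_antisym; [|apply Cmod_ge_0].
assert (Hlim : is_lim_seq (fun j => Rabs a ^ j * K)%R 0%R).
{ replace (Finite 0) with (Rbar_mult 0 K) by (simpl; f_equal; ring).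
  apply is_lim_seq_scal_r, is_lim_seq_geom. rewrite Rabs_Rabsolu. exact Ha. }
apply (is_lim_seq_le (fun _ => Cmod (c m)) _ (Cmod (c m)) 0 (fun j => Hdecay j m)
         (is_lim_seq_const _) Hlim).
Qed.

Record circle_loop (u : R -> C) : Prop := {
  loop_continuous : forall t, continuous u t;
  loop_unimodular : forall t, Cmod (u t) = 1%R;
  loop_pow_mean : forall j, (0 < j)%nat -> is_CInt (fun t => u t ^ j) 0 (2 * PI) (RtoC 0) }.

Lemma circle_loop_eix : circle_loop eix.
Proof.
split; [| exact Cmod_eix |].
- intro t. apply (continuous_ext (fun t => eix (1 * t))); [intro; now rewrite Rmult_1_l|].
  apply continuous_eix_lin.
- intros j Hj. apply (is_RInt_ext (fun t => eix (INR j * t))); [intros; now rewrite Cpow_eix|].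
  apply is_CInt_eix_lin; [apply not_0_INR; lia | apply eix_2PI_mult].
Qed.

Lemma circle_loop_eix_opp : circle_loop (fun t => eix (- t)).
Proof.
split; [| intro; apply Cmod_eix |].
- intro t. apply (continuous_ext (fun t => eix (-1 * t))); [intro; f_equal; ring|].
  apply continuous_eix_lin.
- intros j Hj. apply (is_RInt_ext (fun t => eix (- INR j * t)));
    [intros; rewrite Cpow_eix; f_equal; ring|].
  apply is_CInt_eix_lin; [apply Ropp_neq_0_compat, not_0_INR; lia|].
  rewrite Ropp_mult_distr_l_reverse, eix_opp, eix_2PI_mult.
  apply injective_projections; simpl; field.
Qed.

Section PositiveSpectrum.

Variable u : R -> C.
Hypothesis hu : circle_loop u.

Definition pos_spectrum (g : R -> C) : Prop :=
  (forall t, continuous g t) /\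
  forall m : nat, is_CInt (fun t => g t * u t ^ m) 0 (2 * PI) (RtoC 0).

Lemma pos_spectrum_ext (g h : R -> C) :
  pos_spectrum g -> (forall t, g t = h t) -> pos_spectrum h.
Proof.
intros [Hc Hi] E. split.
- intro t. exact (continuous_ext g h t E (Hc t)).
- intro m. apply (is_CInt_ext (fun t => g t * u t ^ m)); [intros; now rewrite E | apply Hi].
Qed.

Lemma pos_spectrum_mean (g : R -> C) : pos_spectrum g -> is_CInt g 0 (2 * PI) (RtoC 0).
Proof.
intros [_ Hi]. apply (is_CInt_ext (fun t => g t * u t ^ 0)); [intros; simpl; ring | apply Hi].
Qed.

Lemma pos_spectrum_loop : pos_spectrum u.
Proof.
split; [apply (loop_continuous _ hu)|]. intro m.
apply (is_CInt_ext (fun t => u t ^ S m)); [intros; simpl; ring|].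
apply (loop_pow_mean _ hu). lia.
Qed.

Lemma pos_spectrum_scal (r : R) (g : R -> C) :
  pos_spectrum g -> pos_spectrum (fun t => r * g t).
Proof.
intros [Hc Hi]. split.
- intro t. apply continuous_Cmult; [apply continuous_const | apply Hc].
- intro m. replace (RtoC 0) with (r * 0) by ring.
  apply (is_CInt_ext (fun t => r * (g t * u t ^ m))); [intros; ring|].
  apply is_CInt_scal, Hi.
Qed.

Lemma pos_spectrum_mul_lin (a : R) (g : R -> C) :
  pos_spectrum g -> pos_spectrum (fun t => g t * (u t + a)).
Proof.
intros [Hc Hi]. split.
- intro t. apply continuous_Cmult, continuous_Cplus; auto using continuous_const, loop_continuous.
- intro m. replace (RtoC 0) with (0 + a * 0) by ring.
  apply (is_CInt_ext (fun t => g t * u t ^ S m + a * (g t * u t ^ m))); [intros; simpl; ring|].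
  apply is_CInt_plus; [|apply is_CInt_scal]; apply Hi.
Qed.

Lemma pos_spectrum_div_lin (a : R) (g : R -> C) :
  Rabs a < 1 -> pos_spectrum g -> pos_spectrum (fun t => g t / (1 + a * u t)).
Proof.
intros Ha [Hc Hi].
set (h := fun t => g t / (1 + a * u t)).
assert (Hnz : forall t, 1 + a * u t <> 0)
  by (intro t; apply one_plus_scal_neq0; [exact Ha | apply (loop_unimodular _ hu)]).
assert (Hh : forall t, continuous h t).
{ intro t. apply continuous_Cmult; [apply Hc|]. apply continuous_Cinv; [|apply Hnz].
  apply continuous_Cplus, continuous_Cmult; auto using continuous_const, loop_continuous. }
(* [RInt] lands in the carrier of the normed module; [ring] needs the equations typed in [C]. *)
pose (c := (fun m => RInt (V := C_R_CompleteNormedModule) (fun t => h t * u t ^ m) 0 (2 * PI))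
          : nat -> C).
assert (Hcm : forall m, is_CInt (fun t => h t * u t ^ m) 0 (2 * PI) (c m)).
{ intro m. apply RInt_correct, ex_RInt_continuous. intros t _.
  apply continuous_Cmult, continuous_Cpow; [apply Hh | apply (loop_continuous _ hu)]. }
assert (Hrec : forall m, c m = - (a * c (S m))).
{ intro m.
  assert (Hsum : is_CInt (fun t => g t * u t ^ m) 0 (2 * PI) (c m + a * c (S m))).
  { apply (is_CInt_ext (fun t => h t * u t ^ m + a * (h t * u t ^ S m))).
    - intro t. unfold h. simpl. field. apply Hnz.
    - apply is_CInt_plus; [|apply is_CInt_scal]; apply Hcm. }
  apply is_RInt_unique in Hsum. rewrite (is_RInt_unique _ _ _ _ (Hi m)) in Hsum.
  change (@eq C (RtoC 0) (c m + a * c (S m))) in Hsum.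
  rewrite <- (Cplus_0_l (- (a * c (S m)))), Hsum. ring. }
assert (Hbound : forall m, Cmod (c m) <= RInt (fun t => Cmod (h t)) 0 (2 * PI)).
{ intro m. apply (Cmod_is_CInt_le h (fun t => u t ^ m));
    [pose proof PI_RGT_0; lra | exact Hh | | apply Hcm].
  intro t. rewrite Cmod_pow, (loop_unimodular _ hu). apply pow1. }
split; [exact Hh|]. intro m.
rewrite <- (geometric_recurrence_zero c a _ Ha Hbound Hrec m). apply Hcm.
Qed.

End PositiveSpectrum.

Lemma cprod_ext (m : nat) (a : Z) (f g : Z -> C) :
  (forall j, f j = g j) -> cprod m a f = cprod m a g.
Proof.
intro E. revert a. induction m as [|m IH]; intro a; simpl; [reflexivity|]. now rewrite E, IH.
Qed.

Lemma prodZ_ext (a b : Z) (f g : Z -> C) :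
  (forall j, f j = g j) -> prodZ a b f = prodZ a b g.
Proof. apply cprod_ext. Qed.

Lemma cprod_neq0 (m : nat) (a : Z) (f : Z -> C) :
  (forall j, f j <> 0) -> cprod m a f <> 0.
Proof.
intro Hf. revert a. induction m as [|m IH]; intro a; simpl.
- intro E. apply (f_equal fst) in E. simpl in E. lra.
- apply Cmult_neq_0; [apply Hf | apply IH].
Qed.

Lemma prodZ_neq0 (a b : Z) (f : Z -> C) : (forall j, f j <> 0) -> prodZ a b f <> 0.
Proof. apply cprod_neq0. Qed.

Lemma cprod_succ_r (m : nat) (a : Z) (f : Z -> C) :
  cprod (S m) a f = cprod m a f * f (a + Z.of_nat m)%Z.
Proof.
revert a. induction m as [|m IH]; intro a.
- simpl. rewrite Z.add_0_r. ring.
- change (cprod (S (S m)) a f) with (f a * cprod (S m) (a + 1) f).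
  rewrite IH. simpl cprod. replace (a + 1 + Z.of_nat m)%Z with (a + Z.of_nat (S m))%Z by lia. ring.
Qed.

(* When [b < a] both products are empty, hence the alternative [f b = 1]. *)
Lemma prodZ_split_last (a b : Z) (f : Z -> C) :
  (a <= b)%Z \/ f b = 1 -> prodZ a b f = prodZ a (b - 1) f * f b.
Proof.
unfold prodZ. intros [Hab | Hb].
- replace (Z.to_nat (b - a + 1)) with (S (Z.to_nat (b - 1 - a + 1))) by lia.
  rewrite cprod_succ_r. do 2 f_equal. lia.
- destruct (Z_le_gt_dec a b) as [Hab | Hab].
  + replace (Z.to_nat (b - a + 1)) with (S (Z.to_nat (b - 1 - a + 1))) by lia.
    rewrite cprod_succ_r. do 2 f_equal. lia.
  + replace (Z.to_nat (b - a + 1)) with O by lia. replace (Z.to_nat (b - 1 - a + 1)) with O by lia.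
    simpl. rewrite Hb. ring.
Qed.

Lemma prodZ_split_first (a b : Z) (f : Z -> C) :
  (a <= b)%Z \/ f a = 1 -> prodZ a b f = f a * prodZ (a + 1) b f.
Proof.
unfold prodZ. intro H. destruct (Z_le_gt_dec a b) as [Hab | Hab].
- replace (Z.to_nat (b - a + 1)) with (S (Z.to_nat (b - (a + 1) + 1))) by lia. reflexivity.
- destruct H as [H | Ha]; [lia|].
  replace (Z.to_nat (b - a + 1)) with O by lia. replace (Z.to_nat (b - (a + 1) + 1)) with O by lia.
  simpl. rewrite Ha. ring.
Qed.

Section Ladder.

Variables (N : Z) (s : Z -> R) (E : Z -> R -> C) (u v : R -> C).
Hypothesis s_small : forall j, Rabs (s j) < 1.
Hypothesis s_supp : forall j, (N < Z.abs j)%Z -> s j = 0%R.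
Hypothesis hu : circle_loop u.
Hypothesis hv : circle_loop v.
Hypothesis uv : forall t, u t * v t = 1.
Hypothesis E_succ : forall k t, E (k + 1)%Z t = E k t * u t.
Hypothesis E_neq0 : forall k t, E k t <> 0.

(* For [s = S], [E k t = e^{ikt}], [u = e^{it}], [v = e^{-it}], [C_k * ladder k t] is the
   coefficient of [psi_k] in [phi(t)]; for [s = -S] and [E], [u], [v] conjugated, it is the
   coefficient of [psi*_k] in [phi*(t)]. *)
Definition ladder (k : Z) (t : R) : C :=
  E k t * prodZ (- N) (k - 1) (fun j => 1 + s j * v t)
        * prodZ (k + 1) N (fun j => 1 - s j * u t).

Definition ladder_brace (n : Z) (t : R) : C :=
  / (1 + s n * v t) + / (1 - s n * u t) - 1.

Lemma u_neq0 (t : R) : u t <> 0.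
Proof.
intro E0. pose proof (loop_unimodular _ hu t) as H. rewrite E0, Cmod_0 in H. lra.
Qed.

Lemma v_inv (t : R) : v t = / u t.
Proof. rewrite <- (Cmult_1_l (/ u t)), <- (uv t). field. apply u_neq0. Qed.

Lemma one_plus_v_neq0 (j : Z) (t : R) : 1 + s j * v t <> 0.
Proof. apply one_plus_scal_neq0; [apply s_small | apply (loop_unimodular _ hv)]. Qed.

Lemma one_minus_u_neq0 (j : Z) (t : R) : 1 - s j * u t <> 0.
Proof.
replace (1 - s j * u t) with (1 + (- s j)%R * u t) by (rewrite RtoC_opp; ring).
apply one_plus_scal_neq0; [rewrite Rabs_Ropp; apply s_small | apply (loop_unimodular _ hu)].
Qed.

Lemma u_plus_neq0 (j : Z) (t : R) : u t + s j <> 0.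
Proof. apply plus_real_neq0; [apply s_small | apply (loop_unimodular _ hu)]. Qed.

Lemma pos_spectrum_div_one_minus_u (j : Z) (g : R -> C) :
  pos_spectrum u g -> pos_spectrum u (fun t => g t / (1 - s j * u t)).
Proof.
intro Hg. apply (pos_spectrum_ext u (fun t => g t / (1 + (- s j)%R * u t)));
  [|intro t; rewrite RtoC_opp; f_equal; ring].
apply (pos_spectrum_div_lin u hu); [rewrite Rabs_Ropp; apply s_small | exact Hg].
Qed.

Lemma pos_spectrum_div_one_plus_v (j : Z) (g : R -> C) :
  pos_spectrum v g -> pos_spectrum v (fun t => g t / (1 + s j * v t)).
Proof. apply (pos_spectrum_div_lin v hv), s_small. Qed.

Lemma ladder_neq0 (k : Z) (t : R) : ladder k t <> 0.
Proof.
unfold ladder. repeat apply Cmult_neq_0; [apply E_neq0 | |];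
  apply prodZ_neq0; intro j; [apply one_plus_v_neq0 | apply one_minus_u_neq0].
Qed.

Lemma ladder_succ (k : Z) (t : R) :
  ladder (k + 1) t * (1 - s (k + 1)%Z * u t) = ladder k t * (u t + s k).
Proof.
unfold ladder. rewrite Z.add_simpl_r, E_succ.
rewrite (prodZ_split_last (- N) k), (prodZ_split_first (k + 1) N).
- replace (u t + s k) with (u t * (1 + s k * v t)).
  + ring.
  + transitivity (u t + s k * (u t * v t)); [ring | now rewrite uv, Cmult_1_r].
- destruct (Z_le_gt_dec (k + 1) N); [now left | right].
  rewrite s_supp by lia. ring.
- destruct (Z_le_gt_dec (- N) k); [now left | right].
  rewrite s_supp by lia. ring.
Qed.

Lemma ladder_brace_eq (n : Z) (t : R) :
  ladder_brace n t = (1 + s n * s n)%R * u t / ((u t + s n) * (1 - s n * u t)).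
Proof.
pose proof (one_plus_v_neq0 n t) as Hv. pose proof (one_minus_u_neq0 n t).
pose proof (u_plus_neq0 n t). pose proof (u_neq0 t).
unfold ladder_brace. rewrite v_inv in *. rewrite RtoC_plus, RtoC_mult.
field; repeat split; assumption.
Qed.

Lemma ladder_succ_div (k : Z) (t : R) :
  ladder (k + 1) t = ladder k t * (u t + s k) / (1 - s (k + 1)%Z * u t).
Proof. rewrite <- ladder_succ. field. apply one_minus_u_neq0. Qed.

Lemma ladder_pred_div (k : Z) (t : R) :
  ladder k t = ladder (k + 1) t * (v t + (- s (k + 1)%Z)%R) / (1 + s k * v t).
Proof.
transitivity (ladder (k + 1) t * (1 - s (k + 1)%Z * u t) / (u t + s k)).
{ rewrite ladder_succ. field. apply u_plus_neq0. }
pose proof (one_plus_v_neq0 k t). pose proof (u_plus_neq0 k t). pose proof (u_neq0 t).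
rewrite v_inv in *. rewrite RtoC_opp. field; repeat split; assumption.
Qed.

Lemma ladder_ratio_above (n k : Z) :
  (n < k)%Z -> pos_spectrum u (fun t => ladder k t / ladder n t * ladder_brace n t).
Proof.
intro Hnk. replace k with (n + 1 + Z.of_nat (Z.to_nat (k - n - 1)))%Z by lia.
induction (Z.to_nat (k - n - 1)) as [|d IH].
- apply (pos_spectrum_ext u (fun t => (1 + s n * s n)%R * u t
          / (1 - s n * u t) / (1 - s (n + 1)%Z * u t))).
  + apply pos_spectrum_div_one_minus_u, pos_spectrum_div_one_minus_u,
      pos_spectrum_scal, (pos_spectrum_loop u hu).
  + intro t. rewrite Z.add_0_r, ladder_succ_div, ladder_brace_eq.
    pose proof (ladder_neq0 n t). pose proof (u_plus_neq0 n t).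
    pose proof (one_minus_u_neq0 n t). pose proof (one_minus_u_neq0 (n + 1) t).
    field; repeat split; assumption.
- replace (n + 1 + Z.of_nat (S d))%Z with (n + 1 + Z.of_nat d + 1)%Z by lia.
  set (k' := (n + 1 + Z.of_nat d)%Z) in *.
  apply (pos_spectrum_ext u (fun t => ladder k' t / ladder n t * ladder_brace n t
          * (u t + s k') / (1 - s (k' + 1)%Z * u t))).
  + apply pos_spectrum_div_one_minus_u, (pos_spectrum_mul_lin u hu), IH.
  + intro t. rewrite ladder_succ_div.
    pose proof (ladder_neq0 n t). pose proof (one_minus_u_neq0 (k' + 1) t).
    field; repeat split; assumption.
Qed.

Lemma ladder_ratio_below (n k : Z) :
  (k < n)%Z -> pos_spectrum v (fun t => ladder k t / ladder n t * ladder_brace n t).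
Proof.
intro Hkn. replace k with (n - 1 - Z.of_nat (Z.to_nat (n - 1 - k)))%Z by lia.
induction (Z.to_nat (n - 1 - k)) as [|d IH].
- apply (pos_spectrum_ext v (fun t => (1 + s n * s n)%R * v t
          / (1 + s n * v t) / (1 + s (n - 1)%Z * v t))).
  + apply pos_spectrum_div_one_plus_v, pos_spectrum_div_one_plus_v,
      pos_spectrum_scal, (pos_spectrum_loop v hv).
  + intro t. rewrite Z.sub_0_r, ladder_pred_div, Z.sub_add, ladder_brace_eq, RtoC_opp.
    pose proof (ladder_neq0 n t). pose proof (u_neq0 t).
    pose proof (u_plus_neq0 n t). pose proof (one_minus_u_neq0 n t).
    pose proof (one_plus_v_neq0 n t). pose proof (one_plus_v_neq0 (n - 1) t).
    pose proof (u_plus_neq0 (n - 1) t).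
    rewrite v_inv in *. field; repeat split; assumption.
- replace (n - 1 - Z.of_nat (S d))%Z with (n - 1 - Z.of_nat d - 1)%Z by lia.
  set (k' := (n - 1 - Z.of_nat d)%Z) in *.
  apply (pos_spectrum_ext v (fun t => ladder k' t / ladder n t * ladder_brace n t
          * (v t + (- s k')%R) / (1 + s (k' - 1)%Z * v t))).
  + apply pos_spectrum_div_one_plus_v, (pos_spectrum_mul_lin v hv), IH.
  + intro t. rewrite (ladder_pred_div (k' - 1)), Z.sub_add.
    pose proof (ladder_neq0 n t). pose proof (one_plus_v_neq0 (k' - 1) t).
    field; repeat split; assumption.
Qed.

Lemma ladder_brace_mean (n : Z) : is_CInt (ladder_brace n) 0 (2 * PI) (RtoC (2 * PI)).
Proof.
replace (RtoC (2 * PI)) with ((2 * PI - 0)%R * 1 + 0 + 0) by (rewrite Rminus_0_r; ring).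
apply (is_CInt_ext (fun t => 1 + (- s n)%R * v t / (1 + s n * v t)
                              + s n * u t / (1 - s n * u t))).
- intro t. unfold ladder_brace. rewrite RtoC_opp.
  pose proof (one_plus_v_neq0 n t). pose proof (one_minus_u_neq0 n t).
  field; repeat split; assumption.
- apply is_CInt_plus; [apply is_CInt_plus; [apply is_CInt_const|] |].
  + apply (pos_spectrum_mean v), pos_spectrum_div_one_plus_v,
      pos_spectrum_scal, (pos_spectrum_loop v hv).
  + apply (pos_spectrum_mean u), pos_spectrum_div_one_minus_u,
      pos_spectrum_scal, (pos_spectrum_loop u hu).
Qed.

Lemma ladder_ratio_mean (n k : Z) :
  is_CInt (fun t => ladder k t / ladder n t * ladder_brace n t) 0 (2 * PI)
    (if Z.eqb k n then RtoC (2 * PI) else RtoC 0).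
Proof.
destruct (Z.eqb_spec k n) as [-> | Hkn].
- apply (is_CInt_ext (ladder_brace n)); [|apply ladder_brace_mean].
  intro t. field. apply ladder_neq0.
- destruct (Z_lt_le_dec n k) as [Hlt | Hle].
  + apply (pos_spectrum_mean u), ladder_ratio_above. exact Hlt.
  + apply (pos_spectrum_mean v), ladder_ratio_below. lia.
Qed.

End Ladder.

Lemma Sg_small (gamma : Z -> R) (j : Z) :
  (0 <= gamma j)%R -> (sinh (gamma j) < 1)%R -> Rabs (Sg gamma j) < 1.
Proof.
intros Hpos HS. unfold Sg. rewrite Rabs_pos_eq; [exact HS|].
destruct Hpos as [Hlt | <-]; [|rewrite sinh_0; lra].
rewrite <- sinh_0. left. now apply sinh_lt.
Qed.

Lemma Cg_pos (gamma : Z -> R) (j : Z) : (0 < Cg gamma j)%R.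
Proof. unfold Cg, cosh. pose proof (exp_pos (gamma j)). pose proof (exp_pos (- gamma j)). lra. Qed.

Lemma Cg_neq0 (gamma : Z -> R) (j : Z) : RtoC (Cg gamma j) <> 0.
Proof. apply RtoC_neq0. pose proof (Cg_pos gamma j). lra. Qed.

Lemma eix_IZR_succ (k : Z) (t : R) : eix (IZR (k + 1) * t) = eix (IZR k * t) * eix t.
Proof. rewrite <- eix_add, plus_IZR. f_equal. ring. Qed.

Lemma eix_mul_opp (t : R) : eix t * eix (- t) = 1.
Proof. rewrite eix_opp. field. apply eix_neq0. Qed.

Definition phi_ladder (N : Z) (gamma : Z -> R) : Z -> R -> C :=
  ladder N (Sg gamma) (fun k t => eix (IZR k * t)) eix (fun t => eix (- t)).

Definition phistar_ladder (N : Z) (gamma : Z -> R) : Z -> R -> C :=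
  ladder N (fun j => (- Sg gamma j)%R) (fun k t => eix (- (IZR k * t))) (fun t => eix (- t)) eix.

Lemma phi_ladder_eq (N : Z) (gamma : Z -> R) (k : Z) (t : R) :
  phi_ladder N gamma k t = eix (IZR k * t) * PlowP N gamma k t * PhighM N gamma k t.
Proof. reflexivity. Qed.

Lemma phistar_ladder_eq (N : Z) (gamma : Z -> R) (k : Z) (t : R) :
  phistar_ladder N gamma k t = eix (- (IZR k * t)) * PlowM N gamma k t * PhighP N gamma k t.
Proof.
unfold phistar_ladder, ladder, PlowM, PhighP. f_equal; [f_equal|];
  apply prodZ_ext; intro j; rewrite RtoC_opp; ring.
Qed.

Lemma phi_coef_eq (N : Z) (gamma : Z -> R) (k : Z) (t : R) :
  phi_coef N gamma k t = Cg gamma k * phi_ladder N gamma k t.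
Proof. unfold phi_coef. rewrite phi_ladder_eq. ring. Qed.

Lemma phistar_coef_eq (N : Z) (gamma : Z -> R) (k : Z) (t : R) :
  phistar_coef N gamma k t = Cg gamma k * phistar_ladder N gamma k t.
Proof. unfold phistar_coef. rewrite phistar_ladder_eq. ring. Qed.

Section Instances.

Variables (N : Z) (gamma : Z -> R).
Hypothesis S_small : forall j, Rabs (Sg gamma j) < 1.
Hypothesis S_supp : forall j, (N < Z.abs j)%Z -> Sg gamma j = 0%R.

Lemma PlowP_neq0 (n : Z) (t : R) : PlowP N gamma n t <> 0.
Proof. apply prodZ_neq0. intro j. exact (one_plus_v_neq0 _ _ S_small circle_loop_eix_opp j t). Qed.

Lemma PhighM_neq0 (n : Z) (t : R) : PhighM N gamma n t <> 0.
Proof. apply prodZ_neq0. intro j. exact (one_minus_u_neq0 _ _ S_small circle_loop_eix j t). Qed.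

Lemma PlowM_neq0 (n : Z) (t : R) : PlowM N gamma n t <> 0.
Proof. apply prodZ_neq0. intro j. exact (one_minus_u_neq0 _ _ S_small circle_loop_eix j t). Qed.

Lemma PhighP_neq0 (n : Z) (t : R) : PhighP N gamma n t <> 0.
Proof. apply prodZ_neq0. intro j. exact (one_plus_v_neq0 _ _ S_small circle_loop_eix_opp j t). Qed.

Lemma phi_ladder_neq0 (n : Z) (t : R) : phi_ladder N gamma n t <> 0.
Proof. rewrite phi_ladder_eq. auto using Cmult_neq_0, eix_neq0, PlowP_neq0, PhighM_neq0. Qed.

Lemma phistar_ladder_neq0 (n : Z) (t : R) : phistar_ladder N gamma n t <> 0.
Proof. rewrite phistar_ladder_eq. auto using Cmult_neq_0, eix_neq0, PlowM_neq0, PhighP_neq0. Qed.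

Lemma A_n_eq (n : Z) (t : R) :
  A_n N gamma n t = brace gamma n t / (Cg gamma n * phi_ladder N gamma n t).
Proof.
unfold A_n. rewrite phi_ladder_eq, eix_opp. field.
auto using PlowP_neq0, PhighM_neq0, eix_neq0, Cg_neq0.
Qed.

Lemma Astar_n_eq (n : Z) (t : R) :
  Astar_n N gamma n t = brace gamma n t / (Cg gamma n * phistar_ladder N gamma n t).
Proof.
unfold Astar_n. rewrite phistar_ladder_eq, eix_opp. field.
auto using PlowM_neq0, PhighP_neq0, eix_neq0, Cg_neq0.
Qed.

Lemma phi_ratio_mean (n k : Z) :
  is_CInt (fun t => phi_ladder N gamma k t / phi_ladder N gamma n t * brace gamma n t)
    0 (2 * PI) (if Z.eqb k n then RtoC (2 * PI) else RtoC 0).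
Proof.
apply ladder_ratio_mean; auto using circle_loop_eix, circle_loop_eix_opp, eix_IZR_succ,
  eix_neq0, eix_mul_opp.
Qed.

Lemma phistar_ratio_mean (n k : Z) :
  is_CInt (fun t => phistar_ladder N gamma k t / phistar_ladder N gamma n t * brace gamma n t)
    0 (2 * PI) (if Z.eqb k n then RtoC (2 * PI) else RtoC 0).
Proof.
apply (is_CInt_ext (fun t => phistar_ladder N gamma k t / phistar_ladder N gamma n t
          * ladder_brace (fun j => (- Sg gamma j)%R) (fun t => eix (- t)) eix n t)).
- intro t. unfold ladder_brace, brace. rewrite RtoC_opp.
  replace (1 + - Sg gamma n * eix t) with (1 - Sg gamma n * eix t) by ring.
  replace (1 - - Sg gamma n * eix (- t)) with (1 + Sg gamma n * eix (- t)) by ring.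
  ring.
- apply ladder_ratio_mean; auto using circle_loop_eix, circle_loop_eix_opp, eix_neq0.
  + intro j. rewrite Rabs_Ropp. apply S_small.
  + intros j Hj. rewrite S_supp by exact Hj. apply Ropp_0.
  + intro t. rewrite <- (eix_mul_opp (- t)), Ropp_involutive. ring.
  + intros k' t. rewrite <- eix_add, plus_IZR. f_equal. ring.
Qed.

End Instances.

Lemma is_CInt_normalized_ratio (Lk Ln B : R -> C) (ck cn : R) (b : bool) :
  cn <> 0%R -> (forall t, Ln t <> 0) -> (b = true -> ck = cn) ->
  is_CInt (fun t => Lk t / Ln t * B t) 0 (2 * PI) (if b then RtoC (2 * PI) else RtoC 0) ->
  is_CInt (fun t => ck * Lk t * (B t / (cn * Ln t)) * RtoC (/ (2 * PI))) 0 (2 * PI)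
    (if b then RtoC 1 else RtoC 0).
Proof.
intros Hcn HLn Hb Hint. pose proof PI_RGT_0 as Hpi.
set (r := (ck / cn / (2 * PI))%R).
assert (Hfactor : forall t, r * (Lk t / Ln t * B t)
                            = ck * Lk t * (B t / (cn * Ln t)) * RtoC (/ (2 * PI))).
{ intro t. unfold r. rewrite !RtoC_div, RtoC_inv, RtoC_mult by lra.
  field. repeat split; auto; apply RtoC_neq0; lra. }
apply (is_CInt_ext _ _ _ _ _ Hfactor).
destruct b; simpl in Hint |- *.
- replace (RtoC 1) with (r * RtoC (2 * PI)).
  + now apply is_CInt_scal.
  + rewrite <- RtoC_mult. f_equal. unfold r. rewrite Hb by reflexivity. field. lra.
- replace (RtoC 0) with (r * RtoC 0) by ring. now apply is_CInt_scal.
Qed.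

Local Close Scope C_scope.

Theorem propositionF3 (N : Z) (gamma : Z -> R)
  (Hpos : forall j : Z, 0 <= gamma j)
  (HS : forall j : Z, sinh (gamma j) < 1)
  (Hsupp : forall j : Z, (N < Z.abs j)%Z -> gamma j = 0) :
  forall n k : Z,
    is_RInt (V := C_R_CompleteNormedModule)
      (fun th => Cmult (Cmult (phi_coef N gamma k th) (A_n N gamma n th))
                       (RtoC (/ (2 * PI))))
      0 (2 * PI) (if Z.eqb k n then RtoC 1 else RtoC 0)
    /\
    is_RInt (V := C_R_CompleteNormedModule)
      (fun th => Cmult (Cmult (phistar_coef N gamma k th) (Astar_n N gamma n th))
                       (RtoC (/ (2 * PI))))
      0 (2 * PI) (if Z.eqb k n then RtoC 1 else RtoC 0).
Proof.
intros n k.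
assert (Hsmall : forall j, Rabs (Sg gamma j) < 1) by (intro j; apply Sg_small; auto).
assert (Hzero : forall j, (N < Z.abs j)%Z -> Sg gamma j = 0%R)
  by (intros j Hj; unfold Sg; rewrite Hsupp by exact Hj; apply sinh_0).
assert (Hdiag : Z.eqb k n = true -> Cg gamma k = Cg gamma n)
  by (intro H; apply Z.eqb_eq in H; now subst).
pose proof (Cg_pos gamma n) as Hcn.
split.
- apply (is_CInt_ext (fun t => (Cg gamma k * phi_ladder N gamma k t
          * (brace gamma n t / (Cg gamma n * phi_ladder N gamma n t))
          * RtoC (/ (2 * PI))%R)%C)).
  { intro t. now rewrite phi_coef_eq, A_n_eq. }
  apply is_CInt_normalized_ratio; [lra | now apply phi_ladder_neq0 | exact Hdiag |].
  now apply phi_ratio_mean.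
- apply (is_CInt_ext (fun t => (Cg gamma k * phistar_ladder N gamma k t
          * (brace gamma n t / (Cg gamma n * phistar_ladder N gamma n t))
          * RtoC (/ (2 * PI))%R)%C)).
  { intro t. now rewrite phistar_coef_eq, Astar_n_eq. }
  apply is_CInt_normalized_ratio; [lra | now apply phistar_ladder_neq0 | exact Hdiag |].
  now apply phistar_ratio_mean.
Qed.
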